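(* Let $A$ be an associative unital algebra and $(H,\pi_l,\pi_r,\psi_l,\psi_r)$ an L-R-twisting datum for $A$. Then $(H,\pi_r,\psi_r)$ is a right twisting datum for the left twisted algebra $(A,\star)$ and the corresponding right twisted product on $(A,\star)$ equals the L-R-twisted product $\bullet$; likewise $(H,\pi_l,\psi_l)$ is a left twisting datum for the right twisted algebra $(A,\diamond)$ and the corresponding left twisted product on $(A,\diamond)$ equals $\bullet$.
   Context: Work over a field $k$; $H$ an ordinary bialgebra, $\Delta(h)=h_1\otimes h_2$. An L-R-twisting datum for an algebra $A$: $H$-bimodule algebra structure on $A$ (actions $h\cdot a$, $a\cdot h$, with $h\cdot(ab)=(h_1\cdot a)(h_2\cdot b)$, $(ab)\cdot h=(a\cdot h_1)(b\cdot h_2)$, $h\cdot1=1\cdot h=\varepsilon(h)1$), $H$-bicomodule algebra structure on $A$ (algebra maps $\psi_l(a)=a_{[-1]}\otimes a_{[0]}$, $\psi_r(a)=a_{<0>}\otimes a_{<1>}$ forming an $H$-bicomodule), and compatibilities $(h\cdot a)_{[-1]}\otimes(h\cdot a)_{[0]}=a_{[-1]}\otimes h\cdot a_{[0]}$, $(h\cdot a)_{<0>}\otimes(h\cdot a)_{<1>}=h\cdot a_{<0>}\otimes a_{<1>}$, $(a\cdot h)_{[-1]}\otimes(a\cdot h)_{[0]}=a_{[-1]}\otimes a_{[0]}\cdot h$, $(a\cdot h)_{<0>}\otimes(a\cdot h)_{<1>}=a_{<0>}\cdot h\otimes a_{<1>}$. The L-R-twisted product is $a\bullet b=(a_{[0]}\cdot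 b_{<1>})(a_{[-1]}\cdot b_{<0>})$. A left twisting datum $(H,\pi,\psi)$ for an algebra $A$: $A$ is a left $H$-module algebra ($h\cdot a$) and left $H$-comodule algebra ($a\mapsto a_{(-1)}\otimes a_{(0)}$) with $(h\cdot a)_{(-1)}\otimes(h\cdot a)_{(0)}=a_{(-1)}\otimes h\cdot a_{(0)}$; the left twisted product is $a\star b=a_{(0)}(a_{(-1)}\cdot b)$. A right twisting datum $(H,\pi_r,\psi_r)$: $A$ a right $H$-module algebra ($a\cdot h$) and right $H$-comodule algebra ($a\mapsto a_{<0>}\otimes a_{<1>}$) with $(a\cdot h)_{<0>}\otimes(a\cdot h)_{<1>}=a_{<0>}\cdot h\otimes a_{<1>}$; the right twisted product is $a\diamond b=(a\cdot b_{<1>})b_{<0>}$. In the statement, $\star$ is computed from $(H,\pi_l,\psi_l)$ and $\diamond$ from $(H,\pi_r,\psi_r)$. *)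

(* Elements of tensor products U (x) V are represented by finite lists
   of pairs (Sweedler-style sums), and equality of tensors is equality in the
   tensor product, expressed through its universal property (all bilinear /
   trilinear maps into an arbitrary k-module agree). *)
From HB Require Import structures.
From mathcomp Require Import all_boot all_algebra.
Set Implicit Arguments. Unset Strict Implicit. Unset Printing Implicit Defensive.
Import GRing.Theory.
Local Open Scope ring_scope.

Section Twisting.
Variable k : fieldType.

Definition bilinear2 (U V M : lmodType k) (f : U -> V -> M) : Prop :=
  (forall (c : k) x x' y, f (c *: x + x') y = c *: f x y + f x' y) /\
  (forall (c : k) x y y', f x (c *: y + y') = c *: f x y + f x y').

Definition trilinear3 (U V W M : lmodType k) (f : U -> V -> W -> M) : Prop :=
  (forall (c : k) x x' y z, f (c *: x + x') y z = c *: f x y z + f x' y z) /\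
  (forall (c : k) x y y' z, f x (c *: y + y') z = c *: f x y z + f x y' z) /\
  (forall (c : k) x y z z', f x y (c *: z + z') = c *: f x y z + f x y z').

Definition teq2 (U V : lmodType k) (s t : seq (U * V)) : Prop :=
  forall (M : lmodType k) (f : U -> V -> M), bilinear2 f ->
    \sum_(p <- s) f p.1 p.2 = \sum_(p <- t) f p.1 p.2.

Definition teq3 (U V W : lmodType k) (s t : seq (U * V * W)) : Prop :=
  forall (M : lmodType k) (f : U -> V -> W -> M), trilinear3 f ->
    \sum_(p <- s) f p.1.1 p.1.2 p.2 = \sum_(p <- t) f p.1.1 p.1.2 p.2.

Definition tscl2 (U V : lmodType k) (c : k) (s : seq (U * V)) : seq (U * V) :=
  [seq (c *: p.1, p.2) | p <- s].

Definition is_bialgebra (H : algType k) (Delta : H -> seq (H * H)) (eps : H -> k)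
  : Prop :=
  (forall (c : k) g h, teq2 (Delta (c *: g + h)) (tscl2 c (Delta g) ++ Delta h)) /\
  (forall h, teq3 [seq (q.1, q.2, p.2) | p <- Delta h, q <- Delta p.1]
                  [seq (p.1, q.1, q.2) | p <- Delta h, q <- Delta p.2]) /\
  (forall (c : k) g h, eps (c *: g + h) = c * eps g + eps h) /\
  (forall h, \sum_(p <- Delta h) eps p.1 *: p.2 = h) /\
  (forall h, \sum_(p <- Delta h) eps p.2 *: p.1 = h) /\
  (forall g h, teq2 (Delta (g * h))
                    [seq (p.1 * q.1, p.2 * q.2) | p <- Delta g, q <- Delta h]) /\
  teq2 (Delta 1) [:: (1, 1)] /\
  (forall g h, eps (g * h) = eps g * eps h) /\
  eps 1 = 1.

Section OverH.
Variables (H : algType k) (Delta : H -> seq (H * H)) (eps : H -> k).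
Variables (A : lmodType k).

Definition is_alg (mul : A -> A -> A) (one : A) : Prop :=
  bilinear2 mul /\ associative mul /\ left_id one mul /\ right_id one mul.

Definition lmod_alg (mul : A -> A -> A) (one : A) (act : H -> A -> A) : Prop :=
  bilinear2 act /\
  (forall g h a, act (g * h) a = act g (act h a)) /\
  (forall a, act 1 a = a) /\
  (forall h a b, act h (mul a b) = \sum_(p <- Delta h) mul (act p.1 a) (act p.2 b)) /\
  (forall h, act h one = eps h *: one).

Definition rmod_alg (mul : A -> A -> A) (one : A) (act : A -> H -> A) : Prop :=
  bilinear2 act /\
  (forall g h a, act a (g * h) = act (act a g) h) /\
  (forall a, act a 1 = a) /\
  (forall h a b, act (mul a b) h = \sum_(p <- Delta h) mul (act a p.1) (act b p.2)) /\
  (forall h, act one h = eps h *: one).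

(* left H-comodule algebra: psi a = sum a_[-1] (x) a_[0] *)
Definition lcomod_alg (mul : A -> A -> A) (one : A) (psi : A -> seq (H * A)) : Prop :=
  (forall (c : k) a b, teq2 (psi (c *: a + b)) (tscl2 c (psi a) ++ psi b)) /\
  (forall a, teq3 [seq (q.1, q.2, p.2) | p <- psi a, q <- Delta p.1]
                  [seq (p.1, q.1, q.2) | p <- psi a, q <- psi p.2]) /\
  (forall a, \sum_(p <- psi a) eps p.1 *: p.2 = a) /\
  (forall a b, teq2 (psi (mul a b))
                    [seq (p.1 * q.1, mul p.2 q.2) | p <- psi a, q <- psi b]) /\
  teq2 (psi one) [:: (1, one)].

(* right H-comodule algebra: psi a = sum a_<0> (x) a_<1> *)
Definition rcomod_alg (mul : A -> A -> A) (one : A) (psi : A -> seq (A * H)) : Prop :=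
  (forall (c : k) a b, teq2 (psi (c *: a + b)) (tscl2 c (psi a) ++ psi b)) /\
  (forall a, teq3 [seq (q.1, q.2, p.2) | p <- psi a, q <- psi p.1]
                  [seq (p.1, q.1, q.2) | p <- psi a, q <- Delta p.2]) /\
  (forall a, \sum_(p <- psi a) eps p.2 *: p.1 = a) /\
  (forall a b, teq2 (psi (mul a b))
                    [seq (mul p.1 q.1, p.2 * q.2) | p <- psi a, q <- psi b]) /\
  teq2 (psi one) [:: (one, 1)].

Definition left_twisting_datum (mul : A -> A -> A) (one : A)
    (act : H -> A -> A) (psi : A -> seq (H * A)) : Prop :=
  is_alg mul one /\ lmod_alg mul one act /\ lcomod_alg mul one psi /\
  (forall h a, teq2 (psi (act h a)) [seq (p.1, act h p.2) | p <- psi a]).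

Definition right_twisting_datum (mul : A -> A -> A) (one : A)
    (act : A -> H -> A) (psi : A -> seq (A * H)) : Prop :=
  is_alg mul one /\ rmod_alg mul one act /\ rcomod_alg mul one psi /\
  (forall h a, teq2 (psi (act a h)) [seq (act p.1 h, p.2) | p <- psi a]).

Definition LR_twisting_datum (mul : A -> A -> A) (one : A)
    (lact : H -> A -> A) (ract : A -> H -> A)
    (psil : A -> seq (H * A)) (psir : A -> seq (A * H)) : Prop :=
  is_alg mul one /\
  lmod_alg mul one lact /\ rmod_alg mul one ract /\
  (forall h g a, ract (lact h a) g = lact h (ract a g)) /\
  lcomod_alg mul one psil /\ rcomod_alg mul one psir /\
  (forall a, teq3 [seq (q.1, q.2, p.2) | p <- psir a, q <- psil p.1]
                  [seq (p.1, q.1, q.2) | p <- psil a, q <- psir p.2]) /\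
  (forall h a, teq2 (psil (lact h a)) [seq (p.1, lact h p.2) | p <- psil a]) /\
  (forall h a, teq2 (psir (lact h a)) [seq (lact h p.1, p.2) | p <- psir a]) /\
  (forall h a, teq2 (psil (ract a h)) [seq (p.1, ract p.2 h) | p <- psil a]) /\
  (forall h a, teq2 (psir (ract a h)) [seq (ract p.1 h, p.2) | p <- psir a]).

Definition ltw_prod (mul : A -> A -> A) (act : H -> A -> A)
    (psi : A -> seq (H * A)) (a b : A) : A :=
  \sum_(p <- psi a) mul p.2 (act p.1 b).

Definition rtw_prod (mul : A -> A -> A) (act : A -> H -> A)
    (psi : A -> seq (A * H)) (a b : A) : A :=
  \sum_(p <- psi b) mul (act a p.2) p.1.

Definition lrtw_prod (mul : A -> A -> A) (lact : H -> A -> A) (ract : A -> H -> A)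
    (psil : A -> seq (H * A)) (psir : A -> seq (A * H)) (a b : A) : A :=
  \sum_(p <- psil a) \sum_(q <- psir b) mul (ract p.2 q.2) (lact p.1 q.1).

End OverH.
End Twisting.

From HB Require Import structures.
From mathcomp Require Import all_boot all_algebra.
Set Implicit Arguments. Unset Strict Implicit. Unset Printing Implicit Defensive.
Import GRing.Theory.
Local Open Scope ring_scope.

(* Write a * b = a_(0) (a_(-1) . b) for the left twisted product.  The right
   action and the right coaction remain a module-algebra and a comodule-algebra
   structure for *: the right action distributes over * because it commutes
   with the left action and is transported by psi_l, and psi_r is
   multiplicative for * because psi_l and psi_r commute and psi_r is
   transported by the left action.  Expanding (a . b_<1>) * b_<0> and using
   psi_l (a . h) = a_[-1] (x) a_[0] . h gives exactly the L-R-twisted product.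
   The right twisted side is the mirror image.  All tensor identities are
   handled by evaluating arbitrary multilinear maps, so every step is an
   identity between finite sums. *)

Section Multilinear.
Variable k : fieldType.
Implicit Types X U V W M : lmodType k.

Lemma linearf0 U M (f : U -> M) : linear f -> f 0 = 0.
Proof.
move=> Lf; have := Lf 1 0 0; rewrite !scale1r addr0 => f0D.
by apply: (@addIr _ (f 0)); rewrite add0r -f0D.
Qed.

Lemma linearfZ U M (f : U -> M) c x : linear f -> f (c *: x) = c *: f x.
Proof. by move=> Lf; rewrite -[c *: x]addr0 Lf linearf0 ?addr0. Qed.

Lemma linearf_sum U M (f : U -> M) I (r : seq I) (F : I -> U) :
  linear f -> f (\sum_(i <- r) F i) = \sum_(i <- r) f (F i).
Proof.
move=> Lf; apply: big_morph; last exact: linearf0.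
by move=> x y; have := Lf 1 x y; rewrite !scale1r.
Qed.

Lemma linear_comp U V M (g : V -> M) (f : U -> V) :
  linear g -> linear f -> linear (fun x => g (f x)).
Proof. by move=> Lg Lf c x y; rewrite Lf Lg. Qed.

Lemma linear_sum_fun U M I (r : seq I) (F : I -> U -> M) :
  (forall i, linear (F i)) -> linear (fun x => \sum_(i <- r) F i x).
Proof.
by move=> LF c x y; rewrite scaler_sumr -big_split; apply: eq_bigr => i _; apply: LF.
Qed.

Lemma mulr_linearl (B : algType k) (b : B) : linear (fun a : B => a * b).
Proof. by move=> c x y; rewrite mulrDl scalerAl. Qed.

Lemma mulr_linearr (B : algType k) (b : B) : linear (fun a : B => b * a).
Proof. by move=> c x y; rewrite mulrDr scalerAr. Qed.

Lemma bilinear2_of_linear U V M (f : U -> V -> M) :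
  (forall y, linear (f^~ y)) -> (forall x, linear (f x)) -> bilinear2 f.
Proof. by move=> Lf1 Lf2; split=> c *; [apply: Lf1 | apply: Lf2]. Qed.

Lemma bilinear2_linearl U V M (f : U -> V -> M) y : bilinear2 f -> linear (f^~ y).
Proof. by case=> Lf _ c x x'; apply: Lf. Qed.

Lemma bilinear2_linearr U V M (f : U -> V -> M) x : bilinear2 f -> linear (f x).
Proof. by case=> _ Lf c y y'; apply: Lf. Qed.

Lemma trilinear3_of_linear U V W M (f : U -> V -> W -> M) :
  (forall y z, linear (fun x => f x y z)) -> (forall x z, linear (fun y => f x y z)) ->
  (forall x y, linear (f x y)) -> trilinear3 f.
Proof.
by move=> Lf1 Lf2 Lf3; split; [|split] => c *; [apply: Lf1|apply: Lf2|apply: Lf3].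
Qed.

Lemma tensor_sum_linear X U V M (psi : X -> seq (U * V)) (f : U -> V -> M) :
  (forall (c : k) a b, teq2 (psi (c *: a + b)) (tscl2 c (psi a) ++ psi b)) ->
  bilinear2 f -> linear (fun a => \sum_(p <- psi a) f p.1 p.2).
Proof.
move=> psiL fB c a b; rewrite psiL // big_cat big_map /= scaler_sumr; congr (_ + _).
by apply: eq_bigr => p _; rewrite (linearfZ _ _ (bilinear2_linearl _ fB)).
Qed.

End Multilinear.

Section LeftTwistedAlgebra.
Variables (k : fieldType) (H : algType k) (Delta : H -> seq (H * H)) (eps : H -> k)
  (A : lmodType k) (mul : A -> A -> A) (one : A)
  (act : H -> A -> A) (psi : A -> seq (H * A)).
Hypotheses (mulB : bilinear2 mul) (mulA : associative mul)
  (mul1l : left_id one mul) (mul1r : right_id one mul).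
Hypotheses (actB : bilinear2 act)
  (actM : forall g h a, act (g * h) a = act g (act h a))
  (act1 : forall a, act 1 a = a)
  (act_mul : forall h a b,
     act h (mul a b) = \sum_(p <- Delta h) mul (act p.1 a) (act p.2 b))
  (act_one : forall h, act h one = eps h *: one).
Hypotheses
  (psi_linear : forall (c : k) a b, teq2 (psi (c *: a + b)) (tscl2 c (psi a) ++ psi b))
  (psi_coassoc : forall a, teq3 [seq (q.1, q.2, p.2) | p <- psi a, q <- Delta p.1]
                                [seq (p.1, q.1, q.2) | p <- psi a, q <- psi p.2])
  (psi_counit : forall a, \sum_(p <- psi a) eps p.1 *: p.2 = a)
  (psi_mul : forall a b, teq2 (psi (mul a b))
                [seq (p.1 * q.1, mul p.2 q.2) | p <- psi a, q <- psi b])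
  (psi_one : teq2 (psi one) [:: (1, one)]).
Hypothesis psi_act :
  forall h a, teq2 (psi (act h a)) [seq (p.1, act h p.2) | p <- psi a].

Local Notation star := (ltw_prod mul act psi).

Let mulL y : linear (mul^~ y). Proof. exact: bilinear2_linearl. Qed.
Let mulR x : linear (mul x). Proof. exact: bilinear2_linearr. Qed.
Let actL a : linear (act^~ a). Proof. exact: bilinear2_linearl. Qed.
Let actR h : linear (act h). Proof. exact: bilinear2_linearr. Qed.

Lemma ltw_term_bilinear b : bilinear2 (fun h a => mul a (act h b)).
Proof.
apply: bilinear2_of_linear => [a|h]; last exact: mulL.
exact: linear_comp (mulR a) (actL b).
Qed.

Lemma ltw_prod_bilinear : bilinear2 star.
Proof.
apply: bilinear2_of_linear => [b|a].
  exact: tensor_sum_linear psi_linear (ltw_term_bilinear b).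
by apply: linear_sum_fun => p; exact: linear_comp (mulR p.2) (actR p.1).
Qed.

Lemma ltw_prod_suml I (r : seq I) (F : I -> A) c :
  star (\sum_(i <- r) F i) c = \sum_(i <- r) star (F i) c.
Proof. exact: linearf_sum (bilinear2_linearl c ltw_prod_bilinear). Qed.

Lemma ltw_prod_mull u v c : star (mul u v) c =
  \sum_(x <- psi u) \sum_(y <- psi v) mul (mul x.2 y.2) (act (x.1 * y.1) c).
Proof. by rewrite /ltw_prod (psi_mul u v (ltw_term_bilinear c)) big_allpairs_dep. Qed.

Lemma ltw_prod_assoc : associative star.
Proof.
move=> a b c.
(* Coassociativity of [psi], evaluated on [T], identifies the two bracketings. *)
pose T h g m := \sum_(y <- psi b) mul (mul m (act h y.2)) (act (g * y.1) c).
have T_trilinear : trilinear3 T.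
  apply: trilinear3_of_linear => [g m|h m|h g].
  - apply: linear_sum_fun => y.
    exact: linear_comp (mulL _) (linear_comp (mulR m) (actL y.2)).
  - apply: linear_sum_fun => y.
    exact: linear_comp (mulR _) (linear_comp (actL c) (mulr_linearl y.1)).
  - apply: linear_sum_fun => y; exact: linear_comp (mulL _) (mulL _).
have := psi_coassoc a T_trilinear; rewrite !big_allpairs_dep /= => coassocT.
transitivity (\sum_(p <- psi a) \sum_(q <- Delta p.1) T q.1 q.2 p.2).
  rewrite /ltw_prod; apply: eq_bigr => p _.
  rewrite (linearf_sum _ _ (actR p.1)) /=.
  under eq_bigr do rewrite act_mul.
  rewrite (linearf_sum _ _ (mulR p.2)) exchange_big /=; apply: eq_bigr => d _.
  rewrite /T (linearf_sum _ _ (mulR p.2)); apply: eq_bigr => y _.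
  by rewrite mulA actM.
rewrite coassocT [star a b]/ltw_prod ltw_prod_suml; apply: eq_bigr => p _.
rewrite ltw_prod_mull; apply: eq_bigr => x _.
pose G h m := mul (mul x.2 m) (act (x.1 * h) c).
have G_bilinear : bilinear2 G.
  apply: bilinear2_of_linear => [m|h].
    exact: linear_comp (mulR _) (linear_comp (actL c) (mulr_linearr x.1)).
  exact: linear_comp (mulL _) (mulR x.2).
by rewrite (psi_act p.1 b G_bilinear) big_map.
Qed.

Lemma ltw_prod_1l : left_id one star.
Proof.
by move=> b; rewrite /ltw_prod (psi_one (ltw_term_bilinear b)) big_seq1 /= act1 mul1l.
Qed.

Lemma ltw_prod_1r : right_id one star.
Proof.
move=> a; rewrite /ltw_prod -{2}(psi_counit a); apply: eq_bigr => p _.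
by rewrite act_one (linearfZ _ _ (mulR _)) mul1r.
Qed.

End LeftTwistedAlgebra.

Lemma ltw_prod_is_alg (k : fieldType) (H : algType k) (Delta : H -> seq (H * H))
    (eps : H -> k) (A : lmodType k) (mul : A -> A -> A) (one : A)
    (act : H -> A -> A) (psi : A -> seq (H * A)) :
  left_twisting_datum Delta eps mul one act psi -> is_alg (ltw_prod mul act psi) one.
Proof.
case=> [[mulB [mulA [mul1l mul1r]]] [[actB [actM [act1 [act_mul act_one]]]]]].
case=> [[psi_linear [psi_coassoc [psi_counit [psi_mul psi_one]]]] psi_act].
split; first exact: ltw_prod_bilinear.
split; first exact: ltw_prod_assoc.
by split; [exact: ltw_prod_1l | exact: ltw_prod_1r].
Qed.

Section RightTwistedAlgebra.
Variables (k : fieldType) (H : algType k) (Delta : H -> seq (H * H)) (eps : H -> k)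
  (A : lmodType k) (mul : A -> A -> A) (one : A)
  (act : A -> H -> A) (psi : A -> seq (A * H)).
Hypotheses (mulB : bilinear2 mul) (mulA : associative mul)
  (mul1l : left_id one mul) (mul1r : right_id one mul).
Hypotheses (actB : bilinear2 act)
  (actM : forall g h a, act a (g * h) = act (act a g) h)
  (act1 : forall a, act a 1 = a)
  (act_mul : forall h a b,
     act (mul a b) h = \sum_(p <- Delta h) mul (act a p.1) (act b p.2))
  (act_one : forall h, act one h = eps h *: one).
Hypotheses
  (psi_linear : forall (c : k) a b, teq2 (psi (c *: a + b)) (tscl2 c (psi a) ++ psi b))
  (psi_coassoc : forall a, teq3 [seq (q.1, q.2, p.2) | p <- psi a, q <- psi p.1]
                                [seq (p.1, q.1, q.2) | p <- psi a, q <- Delta p.2])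
  (psi_counit : forall a, \sum_(p <- psi a) eps p.2 *: p.1 = a)
  (psi_mul : forall a b, teq2 (psi (mul a b))
                [seq (mul p.1 q.1, p.2 * q.2) | p <- psi a, q <- psi b])
  (psi_one : teq2 (psi one) [:: (one, 1)]).
Hypothesis psi_act :
  forall h a, teq2 (psi (act a h)) [seq (act p.1 h, p.2) | p <- psi a].

Local Notation dia := (rtw_prod mul act psi).

Let mulL y : linear (mul^~ y). Proof. exact: bilinear2_linearl. Qed.
Let mulR x : linear (mul x). Proof. exact: bilinear2_linearr. Qed.
Let actL h : linear (act^~ h). Proof. exact: bilinear2_linearl. Qed.
Let actR a : linear (act a). Proof. exact: bilinear2_linearr. Qed.

Lemma rtw_term_bilinear a : bilinear2 (fun b h => mul (act a h) b).
Proof.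
apply: bilinear2_of_linear => [h|b]; first exact: mulR.
exact: linear_comp (mulL b) (actR a).
Qed.

Lemma rtw_prod_bilinear : bilinear2 dia.
Proof.
apply: bilinear2_of_linear => [b|a].
  by apply: linear_sum_fun => q; exact: linear_comp (mulL q.1) (actL q.2).
exact: tensor_sum_linear psi_linear (rtw_term_bilinear a).
Qed.

Lemma rtw_prod_sumr I (r : seq I) (F : I -> A) a :
  dia a (\sum_(i <- r) F i) = \sum_(i <- r) dia a (F i).
Proof. exact: linearf_sum (bilinear2_linearr a rtw_prod_bilinear). Qed.

Lemma rtw_prod_mulr a u v : dia a (mul u v) =
  \sum_(x <- psi u) \sum_(y <- psi v) mul (act a (x.2 * y.2)) (mul x.1 y.1).
Proof. by rewrite /rtw_prod (psi_mul u v (rtw_term_bilinear a)) big_allpairs_dep. Qed.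

Lemma rtw_prod_assoc : associative dia.
Proof.
move=> a b c.
(* Coassociativity of [psi], evaluated on [T], identifies the two bracketings. *)
pose T m g h := \sum_(x <- psi b) mul (act a (x.2 * g)) (mul (act x.1 h) m).
have T_trilinear : trilinear3 T.
  apply: trilinear3_of_linear => [g h|m h|m g].
  - apply: linear_sum_fun => x; exact: linear_comp (mulR _) (mulR _).
  - apply: linear_sum_fun => x.
    exact: linear_comp (mulL _) (linear_comp (actR a) (mulr_linearr x.2)).
  - apply: linear_sum_fun => x.
    exact: linear_comp (mulR _) (linear_comp (mulL m) (actR x.1)).
have := psi_coassoc c T_trilinear; rewrite !big_allpairs_dep /= => coassocT.
transitivity (\sum_(q <- psi c) \sum_(y <- psi q.1) T y.1 y.2 q.2).
  rewrite [dia b c]/rtw_prod rtw_prod_sumr; apply: eq_bigr => q _.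
  rewrite rtw_prod_mulr.
  pose G m g := \sum_(y <- psi q.1) mul (act a (g * y.2)) (mul m y.1).
  have G_bilinear : bilinear2 G.
    apply: bilinear2_of_linear => [g|m].
      by apply: linear_sum_fun => y; exact: linear_comp (mulR _) (mulL _).
    apply: linear_sum_fun => y.
    exact: linear_comp (mulL _) (linear_comp (actR a) (mulr_linearl y.2)).
  by rewrite (psi_act q.2 b G_bilinear) big_map exchange_big.
rewrite coassocT /rtw_prod; apply: eq_bigr => q _; symmetry.
rewrite (linearf_sum _ _ (actL q.2)) (linearf_sum _ _ (mulL q.1)) /=.
under eq_bigr do rewrite act_mul (linearf_sum _ _ (mulL q.1)).
rewrite exchange_big /=; apply: eq_bigr => d _.
by apply: eq_bigr => x _; rewrite -mulA actM.
Qed.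

Lemma rtw_prod_1l : left_id one dia.
Proof.
move=> b; rewrite /rtw_prod -{2}(psi_counit b); apply: eq_bigr => q _.
by rewrite act_one (linearfZ _ _ (mulL _)) mul1l.
Qed.

Lemma rtw_prod_1r : right_id one dia.
Proof.
by move=> a; rewrite /rtw_prod (psi_one (rtw_term_bilinear a)) big_seq1 /= act1 mul1r.
Qed.

End RightTwistedAlgebra.

Lemma rtw_prod_is_alg (k : fieldType) (H : algType k) (Delta : H -> seq (H * H))
    (eps : H -> k) (A : lmodType k) (mul : A -> A -> A) (one : A)
    (act : A -> H -> A) (psi : A -> seq (A * H)) :
  right_twisting_datum Delta eps mul one act psi -> is_alg (rtw_prod mul act psi) one.
Proof.
case=> [[mulB [mulA [mul1l mul1r]]] [[actB [actM [act1 [act_mul act_one]]]]]].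
case=> [[psi_linear [psi_coassoc [psi_counit [psi_mul psi_one]]]] psi_act].
split; first exact: rtw_prod_bilinear.
split; first exact: rtw_prod_assoc.
by split; [exact: rtw_prod_1l | exact: rtw_prod_1r].
Qed.

Section LRTwisting.
Variables (k : fieldType) (H : algType k) (Delta : H -> seq (H * H))
  (A : lmodType k) (mul : A -> A -> A)
  (lact : H -> A -> A) (ract : A -> H -> A)
  (psil : A -> seq (H * A)) (psir : A -> seq (A * H)).
Hypotheses (mulB : bilinear2 mul) (lactB : bilinear2 lact) (ractB : bilinear2 ract).
Hypotheses
  (lact_mul : forall h a b,
     lact h (mul a b) = \sum_(p <- Delta h) mul (lact p.1 a) (lact p.2 b))
  (ract_mul : forall h a b,
     ract (mul a b) h = \sum_(p <- Delta h) mul (ract a p.1) (ract b p.2))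
  (lact_ract : forall h g a, ract (lact h a) g = lact h (ract a g)).
Hypotheses
  (psil_linear : forall (c : k) a b,
     teq2 (psil (c *: a + b)) (tscl2 c (psil a) ++ psil b))
  (psir_linear : forall (c : k) a b,
     teq2 (psir (c *: a + b)) (tscl2 c (psir a) ++ psir b))
  (psil_mul : forall a b, teq2 (psil (mul a b))
                 [seq (p.1 * q.1, mul p.2 q.2) | p <- psil a, q <- psil b])
  (psir_mul : forall a b, teq2 (psir (mul a b))
                 [seq (mul p.1 q.1, p.2 * q.2) | p <- psir a, q <- psir b])
  (psil_psir : forall a, teq3 [seq (q.1, q.2, p.2) | p <- psir a, q <- psil p.1]
                              [seq (p.1, q.1, q.2) | p <- psil a, q <- psir p.2]).
Hypotheses
  (psir_lact : forall h a, teq2 (psir (lact h a)) [seq (lact h p.1, p.2) | p <- psir a])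
  (psil_ract : forall h a, teq2 (psil (ract a h)) [seq (p.1, ract p.2 h) | p <- psil a]).

Local Notation star := (ltw_prod mul lact psil).
Local Notation dia := (rtw_prod mul ract psir).

Let mulL y : linear (mul^~ y). Proof. exact: bilinear2_linearl. Qed.
Let mulR x : linear (mul x). Proof. exact: bilinear2_linearr. Qed.
Let lactL a : linear (lact^~ a). Proof. exact: bilinear2_linearl. Qed.
Let lactR h : linear (lact h). Proof. exact: bilinear2_linearr. Qed.
Let ractL h : linear (ract^~ h). Proof. exact: bilinear2_linearl. Qed.
Let ractR a : linear (ract a). Proof. exact: bilinear2_linearr. Qed.

Lemma ltw_prod_ract h a b :
  ract (star a b) h = \sum_(d <- Delta h) star (ract a d.1) (ract b d.2).
Proof.
rewrite /ltw_prod (linearf_sum _ _ (ractL h)).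
under eq_bigr do rewrite ract_mul.
rewrite exchange_big /=; apply: eq_bigr => d _.
rewrite (psil_ract d.1 a (ltw_term_bilinear mulB lactB (ract b d.2))) big_map.
by apply: eq_bigr => p _ /=; rewrite lact_ract.
Qed.

Lemma ltw_prod_psir a b : teq2 (psir (star a b))
  [seq (star p.1 q.1, p.2 * q.2) | p <- psir a, q <- psir b].
Proof.
move=> M f fB; rewrite big_allpairs_dep /=.
rewrite (linearf_sum _ _ (tensor_sum_linear psir_linear fB)) /=.
(* The bicomodule axiom, evaluated on [T], exchanges the order of the coactions. *)
pose T h m g := \sum_(y <- psir b) f (mul m (lact h y.1)) (g * y.2).
have T_trilinear : trilinear3 T.
  apply: trilinear3_of_linear => [m g|h g|h m].
  - apply: linear_sum_fun => y.
    exact: linear_comp (bilinear2_linearl _ fB) (linear_comp (mulR m) (lactL y.1)).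
  - apply: linear_sum_fun => y; exact: linear_comp (bilinear2_linearl _ fB) (mulL _).
  - apply: linear_sum_fun => y.
    exact: linear_comp (bilinear2_linearr _ fB) (mulr_linearl y.2).
have := psil_psir a T_trilinear; rewrite !big_allpairs_dep /= => psil_psirT.
transitivity (\sum_(p <- psil a) \sum_(q <- psir p.2) T p.1 q.1 q.2).
  apply: eq_bigr => p _.
  rewrite (psir_mul p.2 (lact p.1 b) fB) big_allpairs_dep /=; apply: eq_bigr => x _.
  have G_bilinear : bilinear2 (fun u g => f (mul x.1 u) (x.2 * g)).
    apply: bilinear2_of_linear => [g|u].
      exact: linear_comp (bilinear2_linearl _ fB) (mulR x.1).
    exact: linear_comp (bilinear2_linearr _ fB) (mulr_linearr x.2).
  by rewrite (psir_lact p.1 b G_bilinear) big_map.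
rewrite -psil_psirT; apply: eq_bigr => x _; symmetry.
under eq_bigr => y _ do rewrite /ltw_prod (linearf_sum _ _ (bilinear2_linearl _ fB)).
by rewrite exchange_big.
Qed.

Lemma rtw_ltw_prod a b :
  rtw_prod star ract psir a b = lrtw_prod mul lact ract psil psir a b.
Proof.
rewrite /rtw_prod /lrtw_prod exchange_big /=; apply: eq_bigr => q _.
by rewrite /ltw_prod (psil_ract q.2 a (ltw_term_bilinear mulB lactB q.1)) big_map.
Qed.

Lemma rtw_prod_lact h a b :
  lact h (dia a b) = \sum_(d <- Delta h) dia (lact d.1 a) (lact d.2 b).
Proof.
rewrite /rtw_prod (linearf_sum _ _ (lactR h)).
under eq_bigr do rewrite lact_mul.
rewrite exchange_big /=; apply: eq_bigr => d _.
rewrite (psir_lact d.2 b (rtw_term_bilinear mulB ractB (lact d.1 a))) big_map.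
by apply: eq_bigr => q _ /=; rewrite lact_ract.
Qed.

Lemma rtw_prod_psil a b : teq2 (psil (dia a b))
  [seq (p.1 * q.1, dia p.2 q.2) | p <- psil a, q <- psil b].
Proof.
move=> M f fB; rewrite big_allpairs_dep /=.
rewrite (linearf_sum _ _ (tensor_sum_linear psil_linear fB)) /=.
(* The bicomodule axiom, evaluated on [T], exchanges the order of the coactions. *)
pose T g m h := \sum_(x <- psil a) f (x.1 * g) (mul (ract x.2 h) m).
have T_trilinear : trilinear3 T.
  apply: trilinear3_of_linear => [m h|g h|g m].
  - apply: linear_sum_fun => x.
    exact: linear_comp (bilinear2_linearl _ fB) (mulr_linearr x.1).
  - apply: linear_sum_fun => x; exact: linear_comp (bilinear2_linearr _ fB) (mulR _).
  - apply: linear_sum_fun => x.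
    exact: linear_comp (bilinear2_linearr _ fB) (linear_comp (mulL m) (ractR x.2)).
have := psil_psir b T_trilinear; rewrite !big_allpairs_dep /= => psil_psirT.
transitivity (\sum_(q <- psir b) \sum_(y <- psil q.1) T y.1 y.2 q.2).
  apply: eq_bigr => q _.
  rewrite (psil_mul (ract a q.2) q.1 fB) big_allpairs_dep /=.
  pose G h m := \sum_(y <- psil q.1) f (h * y.1) (mul m y.2).
  have G_bilinear : bilinear2 G.
    apply: bilinear2_of_linear => [m|h].
      apply: linear_sum_fun => y.
      exact: linear_comp (bilinear2_linearl _ fB) (mulr_linearl y.1).
    apply: linear_sum_fun => y; exact: linear_comp (bilinear2_linearr _ fB) (mulL _).
  by rewrite (psil_ract q.2 a G_bilinear) big_map exchange_big.
rewrite psil_psirT exchange_big; apply: eq_bigr => y _.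
rewrite exchange_big; apply: eq_bigr => x _.
by rewrite /rtw_prod (linearf_sum _ _ (bilinear2_linearr _ fB)).
Qed.

Lemma ltw_rtw_prod a b :
  ltw_prod dia lact psil a b = lrtw_prod mul lact ract psil psir a b.
Proof.
rewrite /ltw_prod /lrtw_prod; apply: eq_bigr => p _.
by rewrite /rtw_prod (psir_lact p.1 b (rtw_term_bilinear mulB ractB p.2)) big_map.
Qed.

End LRTwisting.

Section FromLRTwistingDatum.
Variables (k : fieldType) (H : algType k) (Delta : H -> seq (H * H)) (eps : H -> k)
  (A : lmodType k) (mul : A -> A -> A) (one : A)
  (lact : H -> A -> A) (ract : A -> H -> A)
  (psil : A -> seq (H * A)) (psir : A -> seq (A * H)).
Hypothesis D : LR_twisting_datum Delta eps mul one lact ract psil psir.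

Lemma LR_twisting_datum_left : left_twisting_datum Delta eps mul one lact psil.
Proof.
case: D => [alg [lmod [_ [_ [lcomod [_ [_ [psil_lact _]]]]]]]].
exact: conj alg (conj lmod (conj lcomod psil_lact)).
Qed.

Lemma LR_twisting_datum_right : right_twisting_datum Delta eps mul one ract psir.
Proof.
case: D => [alg [_ [rmod [_ [_ [rcomod [_ [_ [_ [_ psir_ract]]]]]]]]]].
exact: conj alg (conj rmod (conj rcomod psir_ract)).
Qed.

Lemma ltw_prod_right_twisting_datum :
  right_twisting_datum Delta eps (ltw_prod mul lact psil) one ract psir.
Proof.
have star_alg := ltw_prod_is_alg LR_twisting_datum_left.
case: D => [[mulB _] [[lactB _] [rmod [lact_ract [_]]]]].
case=> [rcomod [psil_psir [_ [psir_lact [psil_ract psir_ract]]]]].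
case: rmod => [ractB [ractM [ract1 [ract_mul ract_one]]]].
case: rcomod => [psir_linear [psir_coassoc [psir_counit [psir_mul psir_one]]]].
split=> //; split; last split=> //.
  by split; [|split; [|split; [|split]]] => //; exact: ltw_prod_ract.
by split; [|split; [|split; [|split]]] => //; exact: ltw_prod_psir.
Qed.

Lemma rtw_prod_left_twisting_datum :
  left_twisting_datum Delta eps (rtw_prod mul ract psir) one lact psil.
Proof.
have dia_alg := rtw_prod_is_alg LR_twisting_datum_right.
case: D => [[mulB _] [lmod [[ractB _] [lact_ract [lcomod [_]]]]]].
case=> [psil_psir [psil_lact [psir_lact [psil_ract _]]]].
case: lmod => [lactB [lactM [lact1 [lact_mul lact_one]]]].
case: lcomod => [psil_linear [psil_coassoc [psil_counit [psil_mul psil_one]]]].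
split=> //; split; last split=> //.
  by split; [|split; [|split; [|split]]] => //; exact: rtw_prod_lact.
by split; [|split; [|split; [|split]]] => //; exact: rtw_prod_psil.
Qed.

End FromLRTwistingDatum.

Theorem proposition4p5 (k : fieldType) (H : algType k)
  (Delta : H -> seq (H * H)) (eps : H -> k)
  (A : lmodType k) (mul : A -> A -> A) (one : A)
  (lact : H -> A -> A) (ract : A -> H -> A)
  (psil : A -> seq (H * A)) (psir : A -> seq (A * H)) :
  is_bialgebra Delta eps ->
  LR_twisting_datum Delta eps mul one lact ract psil psir ->
  (right_twisting_datum Delta eps (ltw_prod mul lact psil) one ract psir /\
   forall a b, rtw_prod (ltw_prod mul lact psil) ract psir a b
               = lrtw_prod mul lact ract psil psir a b) /\
  (left_twisting_datum Delta eps (rtw_prod mul ract psir) one lact psil /\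
   forall a b, ltw_prod (rtw_prod mul ract psir) lact psil a b
               = lrtw_prod mul lact ract psil psir a b).
Proof.
move=> _ D.
have [[mulB _] [[lactB _] [[ractB _] [_ [_ [_ [_ [_ [psir_lact [psil_ract _]]]]]]]]]]
  := D.
split; split.
- exact: ltw_prod_right_twisting_datum.
- exact: rtw_ltw_prod.
- exact: rtw_prod_left_twisting_datum.
- exact: ltw_rtw_prod.
Qed.
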